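(* For every $n \geq 2$ and every $i \in \{2,\ldots,n\}$, the number of deranged linear arrangements of $\{1,\ldots,n\}$ whose first entry is $i$ is exactly $d_{n-1}$ (and there are none with first entry $1$).
   Context: A linear arrangement of $\{1,\ldots,n\}$ is a sequence $a_1\cdots a_n$ in which each of $1,\ldots,n$ appears exactly once; it is deranged if $a_t\ne t$ for all $t$. It contains the pattern $ij$ if $a_t=i$ and $a_{t+1}=j$ for some $t$; otherwise it avoids it. $d_m$ is the number of linear arrangements of $\{1,\ldots,m\}$ avoiding all of the patterns $12, 23, \ldots, (m-1)m$. *)

From mathcomp Require Import all_boot.
Set Implicit Arguments. Unset Strict Implicit. Unset Printing Implicit Defensive.

(* Linear arrangements of {1,...,m} are sequences s with perm_eq s (iota 1 m).
   The library's [permutations (iota 1 m)] lists each of them exactly once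
   (lemmas permutations_uniq, mem_permutations), so counting over it counts
   arrangements. Positions are 1-based in the paper: a_t = nth 0 s (t-1). *)

Definition arrangements (m : nat) : seq (seq nat) := permutations (iota 1 m).

Definition contains_pattern (s : seq nat) (i j : nat) : bool :=
  has (fun t => (nth 0 s t == i) && (nth 0 s t.+1 == j)) (iota 0 (size s).-1).

Definition deranged (s : seq nat) : bool :=
  all (fun t => nth 0 s t != t.+1) (iota 0 (size s)).

Definition avoids_successions (m : nat) (s : seq nat) : bool :=
  all (fun k => ~~ contains_pattern s k k.+1) (iota 1 m.-1).

Definition d (m : nat) : nat := count (avoids_successions m) (arrangements m).

From mathcomp Require Import all_boot zify.

(* For i >= 2, conjugating by the transposition (i n) fixes position 1 and
   preserves derangements, so it suffices to count the deranged arrangements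
   starting with n.  These are the n :: sigma, where sigma is a permutation of
   {1, ..., n-1} with sigma t <> t + 1 for all t.  To a word w on {1, ..., m}
   associate the permutation whose cycles are obtained by cutting w before each
   left-to-right minimum (a variant of the inverse of Foata's fundamental
   transformation): x is sent to the letter following it in w, unless that
   letter opens a new cycle or x is the last letter, in which case x is sent to
   the head of its cycle.  This is a bijection, and it sends x to x + 1 exactly when x is
   immediately followed by x + 1 in w, so the permutations above correspond to
   the words avoiding all successions. *)

Set Implicit Arguments.
Unset Strict Implicit.
Unset Printing Implicit Defensive.

Section CountThroughInjection.

Variables (T : eqType) (f : T -> T) (s : seq T).
Hypotheses (s_uniq : uniq s) (f_maps : {in s, forall x, f x \in s})
  (f_inj : {in s &, injective f}).

Lemma perm_map_inj_in_self : perm_eq (map f s) s.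
Proof.
have map_uniq : uniq (map f s) by rewrite map_inj_in_uniq.
have map_sub : {subset map f s <= s} by move=> _ /mapP [x xs ->]; exact: f_maps.
have [_ map_eqi] := uniq_min_size map_uniq map_sub (eq_leq (esym (size_map f s))).
exact: uniq_perm.
Qed.

Lemma count_comp_inj_in (P : pred T) : count (fun x => P (f x)) s = count P s.
Proof. by rewrite -count_map (permP perm_map_inj_in_self). Qed.

End CountThroughInjection.

Lemma eq_from_nth_suffix (T : eqType) (x0 : T) (w v : seq T) : size w = size v ->
  (forall s, s < size w -> drop s.+1 w = drop s.+1 v -> nth x0 w s = nth x0 v s) ->
  w = v.
Proof.
elim: w v => [|a w IHw] [|b v] //= [eq_size] eq_nth.
have eq_tail : w = v by apply: IHw => // s; apply: (eq_nth s.+1).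
by subst v; congr (_ :: _); apply: (eq_nth 0).
Qed.

Lemma mem_arrangements m s : (s \in arrangements m) = perm_eq s (iota 1 m).
Proof. exact: mem_permutations. Qed.

Lemma arrangements_uniq m : uniq (arrangements m).
Proof. exact: permutations_uniq. Qed.

Lemma size_arrangement m s : perm_eq s (iota 1 m) -> size s = m.
Proof. by move/perm_size->; rewrite size_iota. Qed.

Lemma count_head_max m (P : pred (seq nat)) :
  count (fun s => P s && (head 0 s == m.+1)) (arrangements m.+1) =
  count (fun w => P (m.+1 :: w)) (arrangements m).
Proof.
rewrite -(count_filter P) -[RHS](count_map (cons m.+1)); apply/permP/uniq_perm.
- by rewrite filter_uniq // arrangements_uniq.
- by rewrite map_inj_uniq ?arrangements_uniq // => w v [].
have iota_last : perm_eq (iota 1 m.+1) (m.+1 :: iota 1 m).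
  by rewrite -(addn1 m) iotaD perm_catC add1n addn1.
move=> s; rewrite mem_filter mem_arrangements (permPr iota_last).
apply/andP/mapP => [[/eqP head_s s_arr]|[w w_arr ->]].
  case: s head_s s_arr => [//|x w] /= -> s_arr.
  by exists w; rewrite // mem_arrangements -(perm_cons m.+1).
by rewrite /= eqxx perm_cons -mem_arrangements.
Qed.

Lemma derangedP s : reflect (forall t, t < size s -> nth 0 s t != t.+1) (deranged s).
Proof.
apply: (iffP allP) => D t; first by move=> lt_ts; apply: D; rewrite mem_iota.
by rewrite mem_iota => /D.
Qed.

Lemma deranged_head s : deranged s -> head 0 s != 1.
Proof. by case: s => [//|x s] /derangedP /(_ 0 isT). Qed.

Lemma contains_pattern_mem s x y : contains_pattern s x y -> y \in s.
Proof.
case/hasP=> t; rewrite mem_iota add0n ltn_predRL => /andP [_ lt_t] /andP [_ /eqP <-].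
exact: mem_nth.
Qed.

Lemma contains_pattern_uniq s x y : uniq s -> x \in s -> 0 < y ->
  contains_pattern s x y = (nth 0 s (index x s).+1 == y).
Proof.
move=> s_uniq xs y_gt0; apply/hasP/eqP => [[t] | next_y].
  rewrite mem_iota add0n ltn_predRL => /andP [_ lt_t] /andP [/eqP <- /eqP <-].
  by rewrite index_uniq // ltnW.
exists (index x s); last by rewrite nth_index // next_y !eqxx.
rewrite mem_iota add0n ltn_predRL /=; case: ltnP next_y => // le_s_i.
by rewrite nth_default //; lia.
Qed.

Lemma avoids_successions_all m w : perm_eq w (iota 1 m) ->
  avoids_successions m w = all (fun k => ~~ contains_pattern w k k.+1) (iota 1 m).
Proof.
case: m => [//|m] w_arr.
rewrite /avoids_successions -[in RHS](addn1 m) iotaD all_cat /= andbT.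
apply/esym/andb_idr => _; apply/negP => /contains_pattern_mem.
by rewrite (perm_mem w_arr) mem_iota; lia.
Qed.

Definition seqmin (l : seq nat) : nat := foldr minn (head 0 l) l.

Lemma seqmin_le l x : x \in l -> seqmin l <= x.
Proof.
rewrite /seqmin; elim: l (head 0 l) => //= a l IHl x0.
rewrite inE => /predU1P [->|/(IHl x0)]; first exact: geq_minl.
exact: leq_trans (geq_minr _ _).
Qed.

Lemma seqmin_mem l : l != [::] -> seqmin l \in l.
Proof.
rewrite /seqmin; case: l => [//|a l] _; rewrite [head _ _]/=.
have: foldr minn a (a :: l) \in a :: a :: l.
  elim: (a :: l) => [|b r IHr]; first exact: mem_head.
  change (minn b (foldr minn a r) \in a :: b :: r).
  case: (leqP b (foldr minn a r)) => _.
    by rewrite !inE eqxx orbT.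
  by move: IHr; rewrite !inE => /orP [->|->]; rewrite ?orbT.
by rewrite inE => /predU1P [->|//]; exact: mem_head.
Qed.

Lemma eq_seqmin l l' : l =i l' -> seqmin l = seqmin l'.
Proof.
case: l => [|a l]; case: l' => [|b l'] // eq_ll'.
- by have := eq_ll' b; rewrite mem_head.
- by have := eq_ll' a; rewrite mem_head.
apply/eqP; rewrite eqn_leq; apply/andP; split; apply: seqmin_le.
  by rewrite eq_ll' seqmin_mem.
by rewrite -eq_ll' seqmin_mem.
Qed.

Section WordSuccessor.

Variable w : seq nat.

Local Notation prefix_min p := (seqmin (take p.+1 w)).

Lemma prefix_min_nth p : p < size w -> exists2 r, r <= p & prefix_min p = nth 0 w r.
Proof.
move=> lt_pw; have take_ne : take p.+1 w != [::] by case: w lt_pw.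
have := seqmin_mem take_ne; set x := seqmin _ => x_take.
have lt_r : index x (take p.+1 w) < p.+1.
  by move: x_take; rewrite -index_mem size_take_min; lia.
by exists (index x (take p.+1 w)); rewrite // -(nth_take 0 lt_r) nth_index.
Qed.

Lemma prefix_min_le p q : p <= q -> p < size w -> prefix_min q <= nth 0 w p.
Proof.
move=> le_pq lt_pw; apply: seqmin_le.
rewrite -(nth_take 0 (le_pq : p < q.+1)); apply: mem_nth; rewrite size_take_min.
by rewrite leq_min ltnS le_pq lt_pw.
Qed.

(* The cycle through w_p is opened by the last left-to-right minimum up to p,
   which is prefix_min p; the next letter stays in that cycle iff it exceeds it. *)
Definition next_in_cycle (p : nat) : nat := maxn (nth 0 w p.+1) (prefix_min p).

Definition word_succ (x : nat) : nat := next_in_cycle (index x w).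

Lemma next_in_cycle_mem p : p < size w -> next_in_cycle p \in w.
Proof.
move=> lt_pw; have [r le_rp def_mp] := prefix_min_nth lt_pw.
have wr_in : nth 0 w r \in w by apply/mem_nth/(leq_ltn_trans le_rp).
rewrite /next_in_cycle def_mp; case: (ltnP p.+1 (size w)) => [lt_p1w|le_wp1].
  by rewrite /maxn; case: ifP; rewrite // mem_nth.
by rewrite nth_default // max0n.
Qed.

Hypothesis w_uniq : uniq w.

Lemma nth_neq i j : i < j -> j < size w -> nth 0 w i != nth 0 w j.
Proof. by move=> lt_ij lt_jw; rewrite nth_uniq ?(ltn_trans lt_ij) // ltn_eqF. Qed.

Lemma next_in_cycle_neq p q : p < q -> q < size w -> next_in_cycle p != next_in_cycle q.
Proof.
move=> lt_pq lt_qw; have lt_p1w : p.+1 < size w := leq_ltn_trans lt_pq lt_qw.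
have [r le_rp def_mp] := prefix_min_nth (ltn_trans (ltnSn p) lt_p1w).
have le_rq : r <= q := leq_trans le_rp (ltnW lt_pq).
have mq_le_a : prefix_min q <= nth 0 w p.+1 := prefix_min_le lt_pq lt_p1w.
have mq_le_mp : prefix_min q <= nth 0 w r := prefix_min_le le_rq (leq_ltn_trans le_rq lt_qw).
have mp_neq_a : nth 0 w r != nth 0 w p.+1 := nth_neq (le_rp : r < p.+1) lt_p1w.
(* Equality with the prefix minimum at q would force w_(p+1) = w_r. *)
rewrite /next_in_cycle def_mp; case: (ltnP q.+1 (size w)) => [lt_q1w|le_wq1].
  have a_neq_b : nth 0 w p.+1 != nth 0 w q.+1 := nth_neq (lt_pq : p.+1 < q.+1) lt_q1w.
  have mp_neq_b : nth 0 w r != nth 0 w q.+1 := nth_neq (le_rq : r < q.+1) lt_q1w.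
  lia.
by rewrite [nth 0 w q.+1]nth_default // max0n; lia.
Qed.

Lemma word_succ_mem x : x \in w -> word_succ x \in w.
Proof. by rewrite -index_mem; apply: next_in_cycle_mem. Qed.

Lemma next_in_cycle_inj p q : p < size w -> q < size w ->
  next_in_cycle p = next_in_cycle q -> p = q.
Proof.
move=> lt_pw lt_qw eq_next; case: (ltngtP p q) => // [lt_pq|lt_qp].
  by have := next_in_cycle_neq lt_pq lt_qw; rewrite eq_next eqxx.
by have := next_in_cycle_neq lt_qp lt_pw; rewrite eq_next eqxx.
Qed.

Lemma word_succ_inj : {in w &, injective word_succ}.
Proof.
move=> x y xw yw eq_succ; rewrite -(nth_index 0 xw) -(nth_index 0 yw); congr nth.
by apply: next_in_cycle_inj eq_succ; rewrite index_mem.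
Qed.

Lemma word_succ_eq_succ x : x \in w -> (word_succ x == x.+1) = contains_pattern w x x.+1.
Proof.
move=> xw; rewrite contains_pattern_uniq // /word_succ /next_in_cycle.
have mp_le_x : prefix_min (index x w) <= x.
  by rewrite -{2}(nth_index 0 xw) prefix_min_le // index_mem.
by apply/eqP/eqP; lia.
Qed.

End WordSuccessor.

Lemma next_in_cycle_suffix w v s : perm_eq w v -> drop s.+1 w = drop s.+1 v ->
  next_in_cycle w s = next_in_cycle v s.
Proof.
move=> pwv eq_drop.
have eq_next : nth 0 w s.+1 = nth 0 v s.+1 by rewrite -[s.+1]addn0 -!nth_drop eq_drop.
have eq_take : perm_eq (take s.+1 w) (take s.+1 v).
  by rewrite -(perm_cat2r (drop s.+1 w)) {2}eq_drop !cat_take_drop.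
by rewrite /next_in_cycle eq_next (eq_seqmin (perm_mem eq_take)).
Qed.

Definition perm_of_word (m : nat) (w : seq nat) : seq nat := map (word_succ w) (iota 1 m).

Section PermOfWord.

Variables (m : nat) (w : seq nat).
Hypothesis w_arr : perm_eq w (iota 1 m).

Let w_uniq : uniq w. Proof. by rewrite (perm_uniq w_arr) iota_uniq. Qed.

Lemma perm_of_word_arrangement : perm_eq (perm_of_word m w) (iota 1 m).
Proof.
have succ_perm : perm_eq (map (word_succ w) w) w.
  by apply: perm_map_inj_in_self => //; [exact: word_succ_mem | exact: word_succ_inj].
apply: (perm_trans _ (perm_trans succ_perm w_arr)).
by apply: perm_map; rewrite perm_sym.
Qed.

Lemma nth_perm_of_word t : 0 < t <= m ->
  nth 0 (m.+1 :: perm_of_word m w) t = word_succ w t.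
Proof. by case: t => [//|t] /andP [_ le_tm] /=; rewrite (nth_map 0) ?size_iota // nth_iota. Qed.

Lemma deranged_perm_of_word : 0 < m ->
  deranged (m.+1 :: perm_of_word m w) = avoids_successions m w.
Proof.
move=> m_gt0; rewrite avoids_successions_all // /deranged /= size_map size_iota.
rewrite eqSS -lt0n m_gt0 /=; apply: eq_in_all => t; rewrite mem_iota => t_range.
rewrite nth_perm_of_word; last by lia.
by rewrite -word_succ_eq_succ // (perm_mem w_arr) mem_iota.
Qed.

End PermOfWord.

Lemma perm_of_word_inj m : {in arrangements m &, injective (perm_of_word m)}.
Proof.
move=> w v; rewrite !mem_arrangements => w_arr v_arr eq_perm.
have pwv : perm_eq w v by rewrite (permPr v_arr).
have w_uniq : uniq w by rewrite (perm_uniq w_arr) iota_uniq.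
have v_uniq : uniq v by rewrite -(perm_uniq pwv).
have eq_succ : {in w, word_succ w =1 word_succ v}.
  by move/eq_in_map: eq_perm => eq_succ x; rewrite (perm_mem w_arr) => /eq_succ.
apply: (eq_from_nth_suffix (x0 := 0) (perm_size pwv)) => s lt_sw eq_drop.
have lt_sv : s < size v by rewrite -(perm_size pwv).
have vs_in : nth 0 v s \in w by rewrite (perm_mem pwv) mem_nth.
apply: (word_succ_inj w_uniq (mem_nth 0 lt_sw) vs_in).
rewrite [RHS]eq_succ // /word_succ !index_uniq //.
exact: next_in_cycle_suffix.
Qed.

Lemma count_arrangements_perm_of_word m (P : pred (seq nat)) :
  count (fun w => P (perm_of_word m w)) (arrangements m) = count P (arrangements m).
Proof.
apply: count_comp_inj_in; [exact: arrangements_uniq | | exact: perm_of_word_inj].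
by move=> w; rewrite !mem_arrangements; apply: perm_of_word_arrangement.
Qed.

Section Conjugation.

Variables (n : nat) (tau : nat -> nat).
Hypotheses (tauK : involutive tau) (tau_range : forall x, 0 < x <= n -> 0 < tau x <= n).

(* Positions are 1-based, a_p = nth 0 a p.-1: this is tau \o a \o tau. *)
Definition conjugate (a : seq nat) : seq nat := [seq tau (nth 0 a (tau p).-1) | p <- iota 1 n].

Lemma size_conjugate a : size (conjugate a) = n.
Proof. by rewrite size_map size_iota. Qed.

Lemma nth_conjugate a t : t < n -> nth 0 (conjugate a) t = tau (nth 0 a (tau t.+1).-1).
Proof. by move=> lt_tn; rewrite (nth_map 0) ?size_iota // nth_iota. Qed.

Lemma conjugateK a : size a = n -> conjugate (conjugate a) = a.
Proof.
move=> size_a; apply: (@eq_from_nth _ 0); rewrite size_conjugate // => t lt_tn.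
have /andP [tau_gt0 tau_le] := tau_range (lt_tn : 0 < t.+1 <= n).
have lt_pred_tau : (tau t.+1).-1 < n by rewrite prednK.
by rewrite nth_conjugate // nth_conjugate // prednK // !tauK.
Qed.

Lemma conjugate_arrangement a : perm_eq a (iota 1 n) -> perm_eq (conjugate a) (iota 1 n).
Proof.
move=> a_arr; have size_a := size_arrangement a_arr.
have tau_perm : perm_eq (map tau (iota 1 n)) (iota 1 n).
  apply: perm_map_inj_in_self; first exact: iota_uniq.
    by move=> x; rewrite !mem_iota add1n !ltnS; apply: tau_range.
  exact: in2W (can_inj tauK).
have shift_a : map (fun p => nth 0 a p.-1) (iota 1 n) = a.
  apply: (@eq_from_nth _ 0); rewrite size_map size_iota // => t lt_tn.
  by rewrite (nth_map 0) ?size_iota // nth_iota.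
have -> : conjugate a = map tau (map (fun p => nth 0 a p.-1) (map tau (iota 1 n))).
  by rewrite -!map_comp.
have shifted : perm_eq (map (fun p => nth 0 a p.-1) (map tau (iota 1 n))) a.
  by rewrite -{2}shift_a; apply: perm_map.
exact: perm_trans (perm_map tau (perm_trans shifted a_arr)) tau_perm.
Qed.

Lemma deranged_conjugate a : size a = n -> deranged (conjugate a) = deranged a.
Proof.
suff der_conj b : size b = n -> deranged b -> deranged (conjugate b).
  move=> size_a; apply/idP/idP => [|/der_conj]; last exact.
  by rewrite -{2}(conjugateK size_a); apply: der_conj; rewrite size_conjugate.
move=> size_b /derangedP der_b; apply/derangedP => t; rewrite size_conjugate => lt_tn.
have /andP [tau_gt0 tau_le] := tau_range (lt_tn : 0 < t.+1 <= n).
rewrite nth_conjugate // -(inj_eq (can_inj tauK)) tauK.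
by rewrite -{2}(prednK tau_gt0) der_b // size_b prednK.
Qed.

Lemma head_conjugate a : 0 < n -> tau 1 = 1 -> head 0 (conjugate a) = tau (head 0 a).
Proof. by move=> n_gt0 tau1; rewrite -!nth0 nth_conjugate // tau1. Qed.

Lemma count_arrangements_conjugate (P : pred (seq nat)) :
  count (fun a => P (conjugate a)) (arrangements n) = count P (arrangements n).
Proof.
apply: count_comp_inj_in; first exact: arrangements_uniq.
  by move=> a; rewrite !mem_arrangements; apply: conjugate_arrangement.
apply: (can_in_inj (g := conjugate)) => a; rewrite mem_arrangements => a_arr.
exact: conjugateK (size_arrangement a_arr).
Qed.

End Conjugation.

Definition swap (i j x : nat) : nat := if x == i then j else if x == j then i else x.

Lemma swapK i j : involutive (swap i j).
Proof.
move=> x; rewrite /swap.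
have [->|neq_xi] := eqVneq x i; first by rewrite eqxx; case: eqP.
have [->|neq_xj] := eqVneq x j; first by rewrite eqxx.
by rewrite (negbTE neq_xi) (negbTE neq_xj).
Qed.

Lemma swap_eqr i j x : (swap i j x == j) = (x == i).
Proof.
have swap_i : swap i j i = j by rewrite /swap eqxx.
by rewrite -{2}swap_i (can_eq (swapK i j)).
Qed.

Lemma count_deranged_head_swap n i : 1 < i <= n ->
  count (fun s => deranged s && (head 0 s == i)) (arrangements n) =
  count (fun s => deranged s && (head 0 s == n)) (arrangements n).
Proof.
move=> i_range; have swap_range x : 0 < x <= n -> 0 < swap i n x <= n.
  by rewrite /swap; do 2?case: ifP => _; lia.
have swapK_in := swapK i n.
rewrite -[RHS](count_arrangements_conjugate swapK_in swap_range).
have swap_1 : swap i n 1 = 1 by rewrite /swap !ifN_eq //; lia.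
apply: eq_in_count => a; rewrite mem_arrangements => /size_arrangement size_a /=.
by rewrite deranged_conjugate // head_conjugate ?swap_eqr //; lia.
Qed.

Theorem corollary4p6 (n : nat) : 2 <= n ->
  (forall i, 2 <= i <= n ->
     count (fun s => deranged s && (head 0 s == i)) (arrangements n) = d n.-1)
  /\ count (fun s => deranged s && (head 0 s == 1)) (arrangements n) = 0.
Proof.
move=> n_ge2; split => [i i_range|].
  rewrite count_deranged_head_swap //; case: n n_ge2 i_range => [//|m] m_gt0 _.
  rewrite count_head_max /d -[LHS]count_arrangements_perm_of_word /=.
  apply: eq_in_count => w; rewrite mem_arrangements => w_arr.
  exact: deranged_perm_of_word.
apply/eqP; rewrite -leqn0 leqNgt -has_count; apply/hasPn => s _.
by apply/negP => /andP [/deranged_head/negbTE ->].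
Qed.
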